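(* There exist a formula $\phi$ of $\mathcal{D}(\mathsf{M})$, a structure $\mathfrak A$, a team $X$ over $\mathfrak A$ and a set of variables $V$ with $\mathrm{Fr}(\phi)\subseteq V\subseteq\mathrm{dom}(X)$ such that $\mathfrak A\models_{X\upharpoonright V}\phi$ but $\mathfrak A\not\models_X\phi$. That is, the truth of a $\mathcal{D}(\mathsf{M})$-formula in a team may depend on the values of variables that do not occur free in the formula.
   Context: All structures are finite. Dependence logic with majority, $\mathcal{D}(\mathsf{M})[\tau]$: formulas over a vocabulary $\tau$ in negation normal form, built from first-order literals (atomic formulas and negated atomic formulas), dependence atoms $=\!(t_1,\dots,t_n)$ ($t_i$ terms) and their negations $\neg=\!(t_1,\dots,t_n)$, using $\wedge$, $\vee$, $\exists x$, $\forall x$ and $\mathsf{M}x$. $\mathrm{Fr}(\phi)$ denotes the set of free variables, defined as in first-order logic ($\mathsf{M}x$ binds $x$), where the free variables of $=\!(t_1,\dots,t_n)$ are all variables occurring in $t_1,\dots,t_n$. A team $X$ over a structure $\mathfrak A$ with domain $A$ and with finite variable domain $\mathrm{dom}(X)$ is a set of assignments $s:\mathrm{dom}(X)\to A$. For $V\subseteq\mathrm{dom}(X)$, $X\upharpoonright V=\{s\upharpoonright V: s\in X\}$. For $F:X\to A$ let $X(F/x)=\{s(F(s)/x): s\in X\}$ and $X(A/x)=\{s(a/x): s\in X, a\in A\}$, where $s(a/x)$ agrees with $s$ except that it maps $x$ to $a$. Satisfaction $\mathfrak A\models_X\phi$ (for teams whose domain contains the free variables of $\phi$): for a first-order literal,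 every $s\in X$ satisfies it in the usual sense; $\mathfrak A\models_X =\!(t_1,\dots,t_n)$ iff any $s,s'\in X$ giving equal values to $t_1,\dots,t_{n-1}$ give equal values to $t_n$ ($=\!()$ is always true); $\mathfrak A\models_X\neg=\!(t_1,\dots,t_n)$ iff $X=\emptyset$; $\mathfrak A\models_X\psi\wedge\chi$ iff both hold; $\mathfrak A\models_X\psi\vee\chi$ iff $X=Y\cup Z$ with $\mathfrak A\models_Y\psi$ and $\mathfrak A\models_Z\chi$; $\mathfrak A\models_X\exists x\psi$ iff $\mathfrak A\models_{X(F/x)}\psi$ for some $F:X\to A$; $\mathfrak A\models_X\forall x\psi$ iff $\mathfrak A\models_{X(A/x)}\psi$; $\mathfrak A\models_X\mathsf{M}x\psi$ iff for at least $|A|^{|X|}/2$ many functions $F:X\to A$ we have $\mathfrak A\models_{X(F/x)}\psi$. *)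

From HB Require Import structures.
From mathcomp Require Import all_boot.
Set Implicit Arguments. Unset Strict Implicit. Unset Printing Implicit Defensive.

Record vocabulary := Vocabulary {
  fsym : Type; farity : fsym -> nat;
  rsym : Type; rarity : rsym -> nat }.

Inductive term (tau : vocabulary) : Type :=
  | tvar of nat
  | tapp (f : fsym tau) of seq (term tau).

Inductive atom (tau : vocabulary) : Type :=
  | AEq of term tau & term tau
  | ARel (r : rsym tau) of seq (term tau).

(* formulas of D(M) in negation normal form *)
Inductive formula (tau : vocabulary) : Type :=
  | FLit of bool & atom tau              (* FLit true a = a, FLit false a = ~ a *)
  | FDep of seq (term tau)
  | FNDep of seq (term tau)
  | FAnd of formula tau & formula tau
  | FOr of formula tau & formula tau
  | FEx of nat & formula tau
  | FAll of nat & formula tau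
  | FMaj of nat & formula tau.

Section Syntax.
Variable tau : vocabulary.

Fixpoint term_vars (t : term tau) : seq nat :=
  match t with
  | tvar x => [:: x]
  | tapp _ ts => (fix go (l : seq (term tau)) : seq nat :=
                   match l with [::] => [::] | u :: l' => term_vars u ++ go l' end) ts
  end.

Fixpoint wf_term (t : term tau) : bool :=
  match t with
  | tvar _ => true
  | tapp f ts => (size ts == farity f) &&
                 (fix go (l : seq (term tau)) : bool :=
                   match l with [::] => true | u :: l' => wf_term u && go l' end) ts
  end.

Definition atom_vars (a : atom tau) : seq nat :=
  match a with
  | AEq t1 t2 => term_vars t1 ++ term_vars t2
  | ARel _ ts => flatten (map term_vars ts)
  end.

Definition wf_atom (a : atom tau) : bool :=
  match a with
  | AEq t1 t2 => wf_term t1 && wf_term t2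
  | ARel r ts => (size ts == rarity r) && all wf_term ts
  end.

Fixpoint Fr (phi : formula tau) : seq nat :=
  match phi with
  | FLit _ a => atom_vars a
  | FDep ts | FNDep ts => flatten (map term_vars ts)
  | FAnd p q | FOr p q => Fr p ++ Fr q
  | FEx x p | FAll x p | FMaj x p => [seq y <- Fr p | y != x]
  end.

Fixpoint wf_formula (phi : formula tau) : bool :=
  match phi with
  | FLit _ a => wf_atom a
  | FDep ts | FNDep ts => all wf_term ts
  | FAnd p q | FOr p q => wf_formula p && wf_formula q
  | FEx _ p | FAll _ p | FMaj _ p => wf_formula p
  end.
End Syntax.

Record structure (tau : vocabulary) := Structure {
  carrier : finType;
  funi : forall f : fsym tau, (farity f).-tuple carrier -> carrier;
  reli : forall r : rsym tau, (rarity r).-tuple carrier -> bool }.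

Section Semantics.
Variable tau : vocabulary.
Variable M : structure tau.
Local Notation A := (carrier M).

(* An assignment with (finite) variable domain D (a list of variables read
   as a set) is a function from the elements of D to A. *)
Definition assign (D : seq nat) := {ffun seq_sub D -> A}.
Definition team (D : seq nat) := {set assign D}.

Definition lookup D (s : assign D) (x : nat) : option A := omap s (insub x).

Fixpoint eval D (s : assign D) (t : term tau) : option A :=
  match t with
  | tvar x => lookup s x
  | tapp f ts =>
      let vs := (fix go (l : seq (term tau)) : option (seq A) :=
                   match l with
                   | [::] => Some [::]
                   | u :: l' => match eval s u, go l' with
                                | Some a, Some r => Some (a :: r)
                                | _, _ => None end
                   end) ts in
      match vs with
      | Some v => omap (@funi tau M f) (insub v)
      | None => None
      end
  end.

Definition eval_seq D (s : assign D) (ts : seq (term tau)) : seq (option A) :=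
  map (eval s) ts.

Definition all_some (l : seq (option A)) : option (seq A) :=
  foldr (fun o r => match o, r with Some a, Some r' => Some (a :: r') | _, _ => None end)
        (Some [::]) l.

Definition atom_holds D (s : assign D) (a : atom tau) : bool :=
  match a with
  | AEq t1 t2 => match eval s t1, eval s t2 with
                 | Some a1, Some a2 => a1 == a2 | _, _ => false end
  | ARel r ts => match all_some (eval_seq s ts) with
                 | Some vs => match insub vs with
                              | Some t => @reli tau M r t | None => false end
                 | None => false
                 end
  end.

Definition upd D (x : nat) (a : A) (s : assign D) : assign (x :: D) :=
  [ffun y : seq_sub (x :: D) => if val y == x then a else odflt a (lookup s (val y))].

Definition supp D (X : team D) (x : nat)
    (F : {ffun {s : assign D | s \in X} -> A}) : team (x :: D) :=
  [set upd x (F s) (val s) | s : {s : assign D | s \in X}].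

Definition dupl D (X : team D) (x : nat) : team (x :: D) :=
  [set upd x a s | s in X, a in [set: A]].

Definition restr D (X : team D) (V : seq nat) : team V :=
  [set r : assign V | [exists s in X, [forall y : seq_sub V, lookup s (val y) == Some (r y)]]].

Definition dep_holds D (X : team D) (ts : seq (term tau)) : bool :=
  match ts with
  | [::] => true
  | _ => [forall s in X, forall s' in X,
            (eval_seq s (belast (head (tvar tau 0) ts) (behead ts)) ==
             eval_seq s' (belast (head (tvar tau 0) ts) (behead ts))) ==>
            (eval s (last (head (tvar tau 0) ts) (behead ts)) ==
             eval s' (last (head (tvar tau 0) ts) (behead ts)))]
  end.

Fixpoint sat (phi : formula tau) : forall D, team D -> bool :=
  match phi with
  | FLit true a => fun D X => [forall s in X, atom_holds s a]
  | FLit false a => fun D X => [forall s in X, ~~ atom_holds s a]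
  | FDep ts => fun D X => dep_holds X ts
  | FNDep _ => fun D X => X == set0
  | FAnd p q => fun D X => sat p X && sat q X
  | FOr p q => fun D X => [exists Y : team D, exists Z : team D,
                             (X == Y :|: Z) && sat p Y && sat q Z]
  | FEx x p => fun D X => [exists F : {ffun {s : assign D | s \in X} -> A},
                             sat p (supp x F)]
  | FAll x p => fun D X => sat p (dupl X x)
  | FMaj x p => fun D X =>
      #|A| ^ #|X| <= 2 * #|[set F : {ffun {s : assign D | s \in X} -> A} |
                            sat p (supp x F)]|
  end.
End Semantics.

(* Over any structure with universe A, consider phi := M x (x = y) with y <> x
   and y in the domain D of a team X.  A supplement function F : X -> A makes
   x = y true in X(F/x) exactly when F copies the value of y, so exactly one F
   works and  A |=_X phi  iff  |A|^|X| <= 2  (lemma sat_maj_copy).  For the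
   two-element universe this says |X| <= 1.

   Take D = {1, 2}, x = 0, y = 1 and the team X of two assignments that agree
   on y but differ on 2.  Then |X| = 2, so phi fails in X, whereas all members
   of X agree on V = {y}, so X restricted to V has a single element
   (lemma card_restr_le1) and phi holds there. *)

From HB Require Import structures.
From mathcomp Require Import all_boot.
Set Implicit Arguments. Unset Strict Implicit. Unset Printing Implicit Defensive.

Section TeamSemantics.
Variables (tau : vocabulary) (M : structure tau).

Lemma lookup_in D (s : assign M D) x (xD : x \in D) :
  lookup s x = Some (s (Sub x xD)).
Proof. by rewrite /lookup insubT. Qed.

Lemma lookup_upd_same D x a (s : assign M D) : lookup (upd x a s) x = Some a.
Proof. by rewrite (lookup_in _ (mem_head x D)) ffunE /= eqxx. Qed.

Lemma lookup_upd_other D x y a (s : assign M D) (yD : y \in D) :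
  y != x -> lookup (upd x a s) y = Some (s (Sub y yD)).
Proof.
move=> yx; have yxD : y \in x :: D by rewrite inE yD orbT.
by rewrite (lookup_in _ yxD) ffunE /= (negbTE yx) (lookup_in _ yD).
Qed.

Lemma card_restr_le1 D (X : team M D) (V : seq nat) :
  {in X &, forall s s', {in V, forall y, lookup s y = lookup s' y}} ->
  #|restr X V| <= 1.
Proof.
move=> agree; apply/card_le1_eqP => r r'.
rewrite !inE => /existsP[s /andP[Xs rs]] /existsP[s' /andP[Xs' rs']].
apply/ffunP => y.
have /eqP sy := forallP rs y; have /eqP s'y := forallP rs' y.
by move: sy; rewrite (agree s s') ?(valP y) // s'y => -[].
Qed.

End TeamSemantics.

Definition eq_vars (tau : vocabulary) (x y : nat) : formula tau :=
  FLit true (AEq (tvar tau x) (tvar tau y)).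

Section CopyMajority.
Variables (tau : vocabulary) (M : structure tau) (D : seq nat) (X : team M D).
Variables (x y : nat) (yD : y \in D) (yx : y != x).

Local Notation supplement := {ffun {s : assign M D | s \in X} -> carrier M}.

Definition copy_fun : supplement :=
  [ffun s => (val s : assign M D) (Sub y yD : seq_sub D)].

Lemma sat_eq_supp (F : supplement) :
  sat (eq_vars tau x y) (supp x F) =
  [forall s, F s == (val s : assign M D) (Sub y yD : seq_sub D)].
Proof.
apply/forallP/forallP => Fcopies.
- move=> s; have := Fcopies (upd x (F s) (val s)).
  rewrite (imset_f (fun s => upd x (F s) (val s))) ?inE //=.
  by rewrite lookup_upd_same (lookup_upd_other _ _ yD).
- move=> t; apply/implyP => /imsetP[s _ ->] /=.
  by rewrite lookup_upd_same (lookup_upd_other _ _ yD).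
Qed.

Lemma good_supplements :
  [set F : supplement | sat (eq_vars tau x y) (supp x F)] = [set copy_fun].
Proof.
apply/setP => F; rewrite !inE sat_eq_supp; apply/forallP/eqP.
- by move=> Fcopies; apply/ffunP => s; rewrite ffunE; apply/eqP.
- by move=> -> s; rewrite ffunE.
Qed.

(* So M x (x = y) holds in X iff one function out of |A|^|X| is at least half. *)
Lemma sat_maj_copy :
  sat (FMaj x (eq_vars tau x y)) X = (#|carrier M| ^ #|X| <= 2).
Proof. by rewrite /= good_supplements cards1 muln1. Qed.

End CopyMajority.

Definition tau0 := Vocabulary (fun _ : void => 0) (fun _ : void => 0).
Definition M0 : structure tau0 :=
  @Structure tau0 bool (fun f => match f with end) (fun r => match r with end).

Definition s0 : assign M0 [:: 1; 2] := [ffun _ => false].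
Definition s1 : assign M0 [:: 1; 2] := [ffun v => val v == 2].
Definition X0 : team M0 [:: 1; 2] := [set s0; s1].

Lemma X0_agree_on_1 :
  {in X0 &, forall s s', {in [:: 1], forall y, lookup s y = lookup s' y}}.
Proof.
have val1 s : s \in X0 -> lookup s 1 = Some false.
  by rewrite !inE => /orP[] /eqP ->; rewrite (lookup_in _ (mem_head 1 _)) ffunE.
by move=> s s' Xs Xs' y; rewrite inE => /eqP ->; rewrite !val1.
Qed.

Lemma s0_neq_s1 : s0 != s1.
Proof.
apply/negP => /eqP /ffunP /(_ (Sub 2 (isT : 2 \in [:: 1; 2]))).
by rewrite !ffunE.
Qed.

Theorem mainTheorem4 :
  exists (tau : vocabulary) (phi : formula tau) (M : structure tau)
         (D : seq nat) (X : team M D) (V : seq nat),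
    0 < #|carrier M| /\ wf_formula phi /\
    {subset Fr phi <= V} /\ {subset V <= D} /\
    sat phi (restr X V) /\ ~~ sat phi X.
Proof.
exists tau0, (FMaj 0 (eq_vars tau0 0 1)), M0, [:: 1; 2], X0, [:: 1].
have maj_bool n : (2 ^ n <= 2) = (n <= 1) by rewrite -{2}(expn1 2) leq_exp2l.
split; first by rewrite card_bool.
split; first by [].
split; first by [].
split; first by move=> v; rewrite !inE => /eqP ->.
rewrite !(@sat_maj_copy _ _ _ _ 0 1) // card_bool !maj_bool.
split; first exact: card_restr_le1 X0_agree_on_1.
by rewrite cards2 s0_neq_s1.
Qed.
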